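(* Let $r,s,n$ be positive integers. If $P$ is a valid lattice path from $(0,0)$ to $(nr,ns)$, then $P$ is northwest of the staircase $S$, the path from $(0,0)$ to $(nr,ns)$ with step sequence $(E^rN^s)^n$.
   Context: A lattice path is a path in $\mathbb{Z}^2$ consisting of unit steps north ($N$-steps, adding $(0,1)$) and east ($E$-steps, adding $(1,0)$). For fixed positive integers $r,s$, points $v,w\in\mathbb{Z}^2$ are equivalent if $v-w=\ell(r,s)$ for some $\ell\in\mathbb{Z}$; $[v]$ denotes the class of $v$. A lattice path $P$ is valid if whenever $P$ enters a point $v$ with an $E$-step, every later point of $P$ in $[v]$ is also entered by an $E$-step. A path $P$ is northwest of a path $Q$ if for every vertex $(x,y)$ of $P$ there is a vertex $(x',y')$ of $Q$ with $x\le x'$ and $y\ge y'$. *)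

From mathcomp Require Import all_boot all_order all_algebra.
Set Implicit Arguments. Unset Strict Implicit. Unset Printing Implicit Defensive.
Import Order.TTheory GRing.Theory Num.Theory.
Local Open Scope ring_scope.

(* A lattice path starting at (0,0) is encoded by its step sequence:
   [true] = E-step (adds (1,0)), [false] = N-step (adds (0,1)). *)
Definition E_step : bool := true.
Definition N_step : bool := false.

Definition vert (p : seq bool) (i : nat) : int * int :=
  ((count (fun b => b == E_step) (take i p))%:Z,
   (count (fun b => b == N_step) (take i p))%:Z).

Definition ends_at (p : seq bool) (a b : nat) : Prop :=
  count (fun b => b == E_step) p = a /\ count (fun b => b == N_step) p = b.

Definition equiv_rs (r s : nat) (v w : int * int) : Prop :=
  exists l : int, (v.1 - w.1 = l * r%:Z)%R /\ (v.2 - w.2 = l * s%:Z)%R.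

(* Vertex i (1 <= i <= size p) is entered by step number i, i.e. nth _ p i.-1. *)
Definition entered_by_E (p : seq bool) (i : nat) : Prop :=
  nth N_step p i.-1 = E_step.

Definition valid (r s : nat) (p : seq bool) : Prop :=
  forall i j : nat, (1 <= i)%N -> (i < j)%N -> (j <= size p)%N ->
    entered_by_E p i -> equiv_rs r s (vert p j) (vert p i) ->
    entered_by_E p j.

Definition northwest (p q : seq bool) : Prop :=
  forall i : nat, (i <= size p)%N ->
    exists j : nat, (j <= size q)%N /\
      ((vert p i).1 <= (vert q j).1)%R /\ ((vert q j).2 <= (vert p i).2)%R.

Definition staircase (r s n : nat) : seq bool :=
  flatten (nseq n (nseq r E_step ++ nseq s N_step)).

From mathcomp Require Import all_boot all_order all_algebra.
From mathcomp Require Import zify.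

Set Implicit Arguments.
Unset Strict Implicit.
Unset Printing Implicit Defensive.

(* Let e(t) be the number of E-steps among the first t steps of P, and call a
   window of r + s consecutive steps crowded if it holds more than r E-steps.
   Sliding a crowded window one step forward keeps it crowded: it could only
   lose an E-step by dropping an E at step m and gaining an N at step
   m + r + s, but then the vertices reached by these two steps differ by
   exactly (r, s), and validity forces the second step to be an E as well.
   So if e(i (r + s)) <= i r but e((i + 1) (r + s)) > (i + 1) r, every later
   window is crowded and P ends strictly east of (n r, n s).  By induction
   e(i (r + s)) <= i r at every corner, hence e(t) is at most the number of
   E-steps of the staircase after t steps; as both paths have the same length,
   this is northwestness. *)

Definition east (p : seq bool) (t : nat) := count (fun b => b == E_step) (take t p).
Definition north (p : seq bool) (t : nat) := count (fun b => b == N_step) (take t p).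

Lemma vertE p t : vert p t = (Posz (east p t), Posz (north p t)).
Proof. by []. Qed.

Lemma count_E_add_N (p : seq bool) :
  count (fun b => b == E_step) p + count (fun b => b == N_step) p = size p.
Proof. by elim: p => //= -[] p IHp /=; rewrite -IHp ?addnS. Qed.

Lemma northE p t : t <= size p -> north p t = t - east p t.
Proof.
move=> le_t; rewrite /north /east -[X in X - _](size_takel le_t).
by rewrite -(count_E_add_N (take t p)) addKn.
Qed.

Lemma east_size p : east p (size p) = count (fun b => b == E_step) p.
Proof. by rewrite /east take_size. Qed.

Lemma east_le p t : east p t <= t.
Proof. by rewrite /east (leq_trans (count_size _ _)) // size_take_min geq_minl. Qed.

Lemma eastD p t k : east p (t + k) = east p t + east (drop t p) k.
Proof. by rewrite /east takeD count_cat. Qed.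

Lemma east_addn_le p t k : east p (t + k) <= east p t + k.
Proof. by rewrite eastD leq_add2l east_le. Qed.

Lemma east_mono p : {homo east p : t u / t <= u}.
Proof. by move=> t u /subnKC <-; rewrite eastD leq_addr. Qed.

Lemma eastS p t : east p t.+1 = east p t + (nth N_step p t == E_step).
Proof.
rewrite -addn1 eastD; have -> : nth N_step p t = nth N_step (drop t p) 0.
  by rewrite nth_drop addn0.
by case: (drop t p) => [|[] q]; rewrite /east /= ?take0.
Qed.

Lemma northwest_of_east_le p q :
  size p = size q -> (forall t, t <= size p -> east p t <= east q t) ->
  northwest p q.
Proof.
move=> eq_size le_east t le_t; exists t; rewrite -eq_size !vertE /= !lez_nat.
by rewrite le_t le_east // !northE -?eq_size // leq_sub2l ?le_east.
Qed.

Lemma valid_shift_E r s p m :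
  valid r s p -> m + (r + s) < size p ->
  nth N_step p m = E_step ->
  east p (m + (r + s)).+1 = east p m.+1 + r ->
  nth N_step p (m + (r + s)) = E_step.
Proof.
move=> validp lt_size step_m eq_east.
have [-> | pos_rs] := posnP (r + s); first by rewrite addn0.
have := validp m.+1 (m + (r + s)).+1; apply => //; try lia.
exists 1%R; rewrite !vertE /= !northE ?eq_east; try lia.
have := east_le p m.+1; split; lia.
Qed.

Section Staircase.
Variables r s : nat.

Lemma staircaseD i j : staircase r s (i + j) = staircase r s i ++ staircase r s j.
Proof. by rewrite /staircase nseqD flatten_cat. Qed.

Lemma size_staircase n : size (staircase r s n) = n * (r + s).
Proof.
elim: n => // n IHn; rewrite -add1n staircaseD size_cat IHn.
by rewrite /staircase /= cats0 size_cat !size_nseq mulnDl mul1n.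
Qed.

Lemma count_E_staircase n : count (fun b => b == E_step) (staircase r s n) = n * r.
Proof.
rewrite /staircase count_flatten map_nseq sumn_nseq count_cat !count_nseq.
by rewrite eqxx mul1n (_ : (N_step == E_step) = false) // mul0n addn0 mulnC.
Qed.

Lemma east_staircase1 a : a <= r + s -> east (staircase r s 1) a = minn a r.
Proof.
rewrite /east /staircase /= cats0 take_cat size_nseq.
case: ltnP => [lt_ar | le_ra] le_a.
  by rewrite (take_nseq _ (ltnW lt_ar)) count_nseq eqxx mul1n.
rewrite count_cat take_nseq ?leq_subLR // !count_nseq eqxx mul1n.
by rewrite (_ : (N_step == E_step) = false) // mul0n addn0.
Qed.

Lemma east_staircase n i a :
  a < r + s -> i * (r + s) + a <= n * (r + s) ->
  east (staircase r s n) (i * (r + s) + a) = i * r + minn a r.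
Proof.
move=> lt_a le_n; have le_i : i <= n by nia.
rewrite -(subnKC le_i) staircaseD eastD drop_size_cat ?size_staircase //.
rewrite {1}/east take_size_cat ?size_staircase // count_E_staircase; congr (_ + _).
have [-> | a_gt0] := posnP a; first by rewrite /east take0 min0n.
have : 0 < n - i by nia.
case: (n - i) => // k _; rewrite -add1n staircaseD -east_staircase1 ?(ltnW lt_a) //.
by rewrite /east takel_cat // size_staircase mul1n (ltnW lt_a).
Qed.
End Staircase.

Section ValidPath.
Variables (r s : nat) (P : seq bool).
Hypothesis validP : valid r s P.

Definition crowded m := east P m + r < east P (m + (r + s)).

Lemma crowdedS m : m + (r + s) < size P -> crowded m -> crowded m.+1.
Proof.
rewrite /crowded addSn !eastS => lt_size.
case step_m: (nth N_step P m); case step_mr: (nth N_step P (m + (r + s)));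
  rewrite /E_step /= => crowd; try lia.
rewrite addn0 addn1 addSn ltn_neqAle crowd andbT; apply/eqP => eq_east.
suff : nth N_step P (m + (r + s)) = E_step by rewrite step_mr.
apply: (valid_shift_E validP lt_size step_m).
by rewrite !eastS step_m step_mr /E_step /= addn0 addn1 addSn eq_east.
Qed.

Lemma crowded_shift m k : m + k + (r + s) <= size P -> crowded m -> crowded (m + k).
Proof.
elim: k => [|k IHk] le_size crowd; first by rewrite addn0.
by rewrite addnS; apply: crowdedS; [lia | apply: IHk => //; lia].
Qed.

Lemma east_after_crowded m k :
  m + (r + s) + k * (r + s) <= size P -> crowded m ->
  east P (m + (r + s)) + k * r.+1 <= east P (m + (r + s) + k * (r + s)).
Proof.
elim: k => [|k IHk]; first by rewrite !mul0n !addn0.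
rewrite !mulSn => le_size crowd.
have le_next : m + (r + s + k * (r + s)) + (r + s) <= size P by lia.
have := crowded_shift le_next crowd; rewrite /crowded addnA.
have le_prev : m + (r + s) + k * (r + s) <= size P by lia.
have := IHk le_prev crowd.
have -> : m + (r + s) + (r + s + k * (r + s)) = m + (r + s) + k * (r + s) + (r + s).
  by lia.
by lia.
Qed.

Variable n : nat.
Hypotheses (size_P : size P = n * (r + s))
           (count_E_P : count (fun b => b == E_step) P = n * r).

Lemma east_corner_le i : i <= n -> east P (i * (r + s)) <= i * r.
Proof.
elim: i => [|i IHi] le_i; first by rewrite !mul0n /east take0.
rewrite leqNgt !mulSnr; apply/negP => crowd_i.
have crowd : crowded (i * (r + s)) by rewrite /crowded; have := IHi (ltnW le_i); lia.
have split_n q : i * q + q + (n - i.+1) * q = n * q by rewrite -mulSnr -mulnDl subnKC.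
have := east_after_crowded (k := n - i.+1) _ crowd.
rewrite split_n -size_P east_size count_E_P => /(_ (leqnn _)).
have := split_n r; rewrite mulnS; lia.
Qed.

Lemma east_corner_add_le i a :
  a < r + s -> i * (r + s) + a <= size P ->
  east P (i * (r + s) + a) <= i * r + minn a r.
Proof.
move=> lt_a le_size; case: (leqP a r) => [le_ar | lt_ra].
  have le_i : i <= n by rewrite size_P in le_size; nia.
  by rewrite (leq_trans (east_addn_le _ _ _)) // leq_add2r east_corner_le.
have lt_i : i < n by rewrite size_P in le_size; nia.
rewrite -mulSnr (leq_trans (east_mono _ (_ : _ <= i.+1 * (r + s)))) ?east_corner_le //.
by rewrite mulSnr leq_add2l ltnW.
Qed.

Lemma east_le_staircase t :
  0 < r + s -> t <= size P -> east P t <= east (staircase r s n) t.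
Proof.
move=> rs_gt0; rewrite (divn_eq t (r + s)).
move: (t %/ _) (t %% _) (ltn_pmod t rs_gt0) => i a lt_a le_size.
by rewrite east_staircase -?size_P // east_corner_add_le.
Qed.
End ValidPath.

Theorem mainTheorem4 (r s n : nat) (P : seq bool) :
  (0 < r)%N -> (0 < s)%N -> (0 < n)%N ->
  ends_at P (n * r) (n * s) -> valid r s P ->
  northwest P (staircase r s n).
Proof.
move=> r_gt0 _ _ [count_E_P count_N_P] validP.
have size_P : size P = n * (r + s) by rewrite -count_E_add_N count_E_P count_N_P mulnDr.
apply: northwest_of_east_le => [|t]; first by rewrite size_staircase.
exact: (east_le_staircase validP size_P count_E_P (ltn_addr s r_gt0)).
Qed.
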